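(* Let $\lambda_1 \in \mathbb{R}\setminus\{0\}$ and let all constants $\mu_i$ ($i=1,\dots,7$) be arbitrary real numbers. For real functions $F,K,R$ of one variable, consider the nonlinear differential operator acting on smooth functions $w=w(z)$, $$\mathbf{F}_T[w]=\frac{d}{dz}\Big(F(w)\frac{dw}{dz}\Big)+K(w)\frac{dw}{dz}+R(w).$$ A finite-dimensional linear space $\mathbf{V}$ of functions of $z$ is called invariant under $\mathbf{F}_T$ if $\mathbf{F}_T[w]\in\mathbf{V}$ for every $w\in\mathbf{V}$. Then in each of the following five cases the two-dimensional space $\mathbf{V}_2$ (which is the solution space of a second-order linear ODE $y''+p_1(z)y'+p_0(z)y=0$ with $p_1(z)p_0(z)=0$) is invariant under $\mathbf{F}_T$: 1. $F(w)=\lambda_1^2\big(\tfrac12\mu_5w^2+\mu_6w+\mu_7\big)$, $K(w)=\lambda_1(\mu_3w+\mu_4)$, $R(w)=\mu_1w+\mu_2$, and $\mathbf{V}_2=\mathrm{Span}\{1,z\}$. 2. For $\rho_1\neq0$: $F(w)=\lambda_1^2\Big(-\frac{1}{12}\cdot\frac{-6\mu_5\rho_1\lambda_1w-\mu_1w^2+3\mu_2w}{\rho_1^2\lambda_1^2}+\mu_7\Big)$, $K(w)=\lambda_1\Big(\frac{5}{12}\frac{\mu_1w^2}{\rho_1\lambda_1}+\mu_5w+\mu_6\Big)$, $R(w)=\frac16\mu_1w^3+\frac12\mu_2w^2+\mu_3w+\mu_4$, and $\mathbf{V}_2=\mathrm{Span}\{1,e^{-\rho_1z}\}$. 3. For $\rho_0>0$: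 $F(w)=\lambda_1^2\Big(\frac{\mu_1w^2}{3\lambda_1^2\rho_0}+\mu_4\Big)$, $K(w)=\lambda_1\mu_3$, $R(w)=\mu_1w^3+\mu_2w$, and $\mathbf{V}_2=\mathrm{Span}\{\sin(\sqrt{\rho_0}z),\cos(\sqrt{\rho_0}z)\}$. 4. $F(w)=\lambda_1^2(\mu_4w+\mu_5)$, $K(w)=0$, $R(w)=\mu_2w+\mu_3$, and $\mathbf{V}_2=\mathrm{Span}\{1,(z-\mu_1)^2\}$. 5. For $\mu_1\neq0$: $F(w)=\lambda_1^2\Big(\frac{\mu_1^2\mu_3}{4\lambda_1^2}w+\mu_6\Big)$, $K(w)=0$, $R(w)=\frac12\mu_3w^2+\mu_4w+\mu_5$, and $\mathbf{V}_2=\mathrm{Span}\{1,\sin\big(\tfrac{z+\mu_2}{\mu_1}\big)\}$.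
   Context: This operator arises from the $(3+1)$-dimensional time-fractional convection-diffusion-reaction equation $\partial_t^\alpha u=\sum_{r=1}^3\partial_{x_r}(F_r(u)\partial_{x_r}u)+\sum_{r=1}^3K_r(u)\partial_{x_r}u+R(u)$ via the substitution $u(x_1,x_2,x_3,t)=w(z,t)$, $z=\lambda_1x_1+\lambda_2x_2+\lambda_3x_3$, with $F(w)=\sum_{r=1}^3\lambda_r^2F_r(w)$ and $K(w)=\sum_{r=1}^3\lambda_rK_r(w)$; the claim concerns only the resulting ordinary differential operator in $z$. *)

From Stdlib Require Import Reals.
From Coquelicot Require Import Coquelicot.
Open Scope R_scope.

(* Derive is Coquelicot's total derivative operator (agrees with the
   true derivative wherever it exists; all w considered here are smooth). *)
Definition FT (F K Rf : R -> R) (w : R -> R) (z : R) : R :=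
  Derive (fun y => F (w y) * Derive w y) z + K (w z) * Derive w z + Rf (w z).

Definition in_span2 (f1 f2 g : R -> R) : Prop :=
  exists c1 c2 : R, forall z : R, g z = c1 * f1 z + c2 * f2 z.

Definition invariant2 (F K Rf : R -> R) (f1 f2 : R -> R) : Prop :=
  forall w : R -> R, in_span2 f1 f2 w -> in_span2 f1 f2 (FT F K Rf w).

(* By the chain rule, F_T[w] = F'(w) w'^2 + F(w) w'' + K(w) w' + R(w).  For w = c1 f1 + c2 f2
   in each of the five spaces, w' and w'' are again expressible through w (for the
   trigonometric spaces after using sin^2 + cos^2 = 1), so F_T[w] is a polynomial in the
   basis functions.  Its higher-degree terms cancel exactly when the coefficients of F, K
   and R satisfy one or two linear relations, and the five families of the theorem are
   instances of these relations. *)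
From Stdlib Require Import Reals Lra.
From Coquelicot Require Import Coquelicot.
Open Scope R_scope.

Lemma FT_ext (F K Rf G L S w v : R -> R) :
  (forall x, F x = G x) -> (forall x, K x = L x) -> (forall x, Rf x = S x) ->
  (forall z, w z = v z) -> forall z, FT F K Rf w z = FT G L S v z.
Proof.
  intros HF HK HR Hw z. unfold FT.
  assert (Hd : forall y, Derive w y = Derive v y) by (intro; now apply Derive_ext).
  rewrite HK, HR, Hw, Hd.
  f_equal. f_equal. apply Derive_ext. intro y. now rewrite HF, Hw, Hd.
Qed.

Lemma in_span2_ext (f1 f2 g1 g2 v w : R -> R) :
  (forall z, f1 z = g1 z) -> (forall z, f2 z = g2 z) -> (forall z, v z = w z) ->
  in_span2 g1 g2 w -> in_span2 f1 f2 v.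
Proof.
  intros H1 H2 Hv [c1 [c2 Hw]]. exists c1, c2. intro z. now rewrite Hv, Hw, H1, H2.
Qed.

Lemma invariant2_ext {G L S g1 g2 : R -> R} (F K Rf f1 f2 : R -> R) :
  invariant2 G L S g1 g2 ->
  (forall x, F x = G x) -> (forall x, K x = L x) -> (forall x, Rf x = S x) ->
  (forall z, f1 z = g1 z) -> (forall z, f2 z = g2 z) -> invariant2 F K Rf f1 f2.
Proof.
  intros Hinv HF HK HR H1 H2 w Hw.
  apply (in_span2_ext _ _ g1 g2 _ (FT G L S w) H1 H2).
  - now apply FT_ext.
  - apply Hinv. apply (in_span2_ext _ _ f1 f2 _ w); auto.
Qed.

Lemma invariant2_of_combinations (F K Rf f1 f2 : R -> R) :
  (forall c1 c2, in_span2 f1 f2 (FT F K Rf (fun z => c1 * f1 z + c2 * f2 z))) ->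
  invariant2 F K Rf f1 f2.
Proof.
  intros H w [c1 [c2 Hw]].
  destruct (H c1 c2) as [d1 [d2 Hd]]. exists d1, d2. intro z.
  rewrite <- Hd. now apply FT_ext.
Qed.

Lemma FT_chain_rule (F F' K Rf w w1 w2 : R -> R) :
  (forall x, is_derive F x (F' x)) ->
  (forall y, is_derive w y (w1 y)) -> (forall y, is_derive w1 y (w2 y)) ->
  forall z, FT F K Rf w z = F' (w z) * w1 z ^ 2 + F (w z) * w2 z + K (w z) * w1 z + Rf (w z).
Proof.
  intros HF H1 H2 z. unfold FT.
  assert (Hd : forall y, Derive w y = w1 y) by (intro; now apply is_derive_unique).
  rewrite (Derive_ext _ (fun y => F (w y) * w1 y)) by (intro; now rewrite Hd).
  assert (Hprod : Derive (fun y => F (w y) * w1 y) z = w1 z * F' (w z) * w1 z + F (w z) * w2 z).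
  { apply is_derive_unique.
    exact (is_derive_mult (fun y => F (w y)) w1 z _ _
             (is_derive_comp F w z _ _ (HF _) (H1 z)) (H2 z) Rmult_comm). }
  rewrite Hprod, Hd. ring.
Qed.

Lemma cos_sqr (x : R) : cos x ^ 2 = 1 - sin x ^ 2.
Proof. rewrite <- (sin2_cos2 x). unfold Rsqr. ring. Qed.

Lemma sin_cos_combination_sqr (a b x : R) :
  (a * cos x - b * sin x) ^ 2 = a ^ 2 + b ^ 2 - (a * sin x + b * cos x) ^ 2.
Proof.
  replace (a ^ 2 + b ^ 2) with ((a ^ 2 + b ^ 2) * (sin x ^ 2 + cos x ^ 2))
    by (rewrite cos_sqr; ring).
  ring.
Qed.

Ltac solve_derive := intro; auto_derive; [easy | field].

Lemma invariant2_1_z (f2 f1 f0 k1 k0 r1 r0 : R) :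
  invariant2 (fun w => f2 * w ^ 2 + f1 * w + f0) (fun w => k1 * w + k0)
    (fun w => r1 * w + r0) (fun _ => 1) (fun z => z).
Proof.
  apply invariant2_of_combinations. intros c1 c2.
  exists ((2 * f2 * c1 + f1) * c2 ^ 2 + (k1 * c1 + k0) * c2 + r1 * c1 + r0),
         (2 * f2 * c2 ^ 3 + k1 * c2 ^ 2 + r1 * c2).
  intro z.
  rewrite (FT_chain_rule _ (fun w => 2 * f2 * w + f1) _ _ _ (fun _ => c2) (fun _ => 0))
    by solve_derive.
  ring.
Qed.

(* The relations on K and R are exactly what kills the w^3 and w^2 terms of F_T[w]. *)
Lemma invariant2_1_exp (r f2 f1 f0 k1 k0 r1 r0 : R) :
  invariant2 (fun w => f2 * w ^ 2 + f1 * w + f0)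
    (fun w => 5 * r * f2 * w ^ 2 + k1 * w + k0)
    (fun w => 2 * r ^ 2 * f2 * w ^ 3 + (r * k1 - 2 * r ^ 2 * f1) * w ^ 2 + r1 * w + r0)
    (fun _ => 1) (fun z => exp (- r * z)).
Proof.
  apply invariant2_of_combinations. intros c1 c2.
  pose (F c := f2 * c ^ 2 + f1 * c + f0).
  pose (K c := 5 * r * f2 * c ^ 2 + k1 * c + k0).
  pose (dRf c := 6 * r ^ 2 * f2 * c ^ 2 + 2 * (r * k1 - 2 * r ^ 2 * f1) * c + r1).
  exists (2 * r ^ 2 * f2 * c1 ^ 3 + (r * k1 - 2 * r ^ 2 * f1) * c1 ^ 2 + r1 * c1 + r0),
         (c2 * (r ^ 2 * F c1 - r * K c1 + dRf c1)).
  intro z.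
  rewrite (FT_chain_rule _ (fun w => 2 * f2 * w + f1) _ _ _
             (fun y => - r * c2 * exp (- r * y)) (fun y => r ^ 2 * c2 * exp (- r * y)))
    by solve_derive.
  unfold F, K, dRf. ring.
Qed.

Lemma invariant2_sin_cos (s a b k d : R) :
  invariant2 (fun w => a * w ^ 2 + b) (fun _ => k) (fun w => 3 * s ^ 2 * a * w ^ 3 + d * w)
    (fun z => sin (s * z)) (fun z => cos (s * z)).
Proof.
  apply invariant2_of_combinations. intros c1 c2.
  pose (e := 2 * a * s ^ 2 * (c1 ^ 2 + c2 ^ 2) - b * s ^ 2 + d).
  exists (e * c1 - k * s * c2), (e * c2 + k * s * c1).
  intro z.
  rewrite (FT_chain_rule _ (fun w => 2 * a * w) _ _ _
             (fun y => s * (c1 * cos (s * y) - c2 * sin (s * y)))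
             (fun y => - s ^ 2 * (c1 * sin (s * y) + c2 * cos (s * y))))
    by solve_derive.
  rewrite Rpow_mult_distr, sin_cos_combination_sqr.
  unfold e. ring.
Qed.

Lemma invariant2_1_sqr (p a1 a0 r1 r0 : R) :
  invariant2 (fun w => a1 * w + a0) (fun _ => 0) (fun w => r1 * w + r0)
    (fun _ => 1) (fun z => (z - p) ^ 2).
Proof.
  apply invariant2_of_combinations. intros c1 c2.
  exists (2 * c2 * (a1 * c1 + a0) + r1 * c1 + r0), (6 * a1 * c2 ^ 2 + r1 * c2).
  intro z.
  rewrite (FT_chain_rule _ (fun _ => a1) _ _ _ (fun y => 2 * c2 * (y - p)) (fun _ => 2 * c2))
    by solve_derive.
  ring.
Qed.

Lemma invariant2_1_sin (q p a1 a0 r1 r0 : R) :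
  invariant2 (fun w => a1 * w + a0) (fun _ => 0)
    (fun w => 2 * q ^ 2 * a1 * w ^ 2 + r1 * w + r0)
    (fun _ => 1) (fun z => sin (q * z + p)).
Proof.
  apply invariant2_of_combinations. intros c1 c2.
  exists (a1 * q ^ 2 * c2 ^ 2 + 2 * q ^ 2 * a1 * c1 ^ 2 + r1 * c1 + r0),
         (- q ^ 2 * (a1 * c1 + a0) * c2 + 4 * q ^ 2 * a1 * c1 * c2 + r1 * c2).
  intro z.
  rewrite (FT_chain_rule _ (fun _ => a1) _ _ _
             (fun y => q * c2 * cos (q * y + p)) (fun y => - q ^ 2 * c2 * sin (q * y + p)))
    by solve_derive.
  rewrite Rpow_mult_distr, cos_sqr.
  ring.
Qed.
Theorem theorem3 (l1 m1 m2 m3 m4 m5 m6 m7 : R) (Hl1 : l1 <> 0) :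
  (* case 1 *)
  invariant2
    (fun w => l1 ^ 2 * (/ 2 * m5 * w ^ 2 + m6 * w + m7))
    (fun w => l1 * (m3 * w + m4))
    (fun w => m1 * w + m2)
    (fun _ => 1) (fun z => z)
  /\
  (* case 2 *)
  (forall r1 : R, r1 <> 0 ->
    invariant2
      (fun w => l1 ^ 2 * (- (1 / 12) *
                  ((- 6 * m5 * r1 * l1 * w - m1 * w ^ 2 + 3 * m2 * w)
                     / (r1 ^ 2 * l1 ^ 2)) + m7))
      (fun w => l1 * (5 / 12 * (m1 * w ^ 2 / (r1 * l1)) + m5 * w + m6))
      (fun w => 1 / 6 * m1 * w ^ 3 + 1 / 2 * m2 * w ^ 2 + m3 * w + m4)
      (fun _ => 1) (fun z => exp (- r1 * z)))
  /\
  (* case 3 *)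
  (forall r0 : R, 0 < r0 ->
    invariant2
      (fun w => l1 ^ 2 * (m1 * w ^ 2 / (3 * l1 ^ 2 * r0) + m4))
      (fun _ => l1 * m3)
      (fun w => m1 * w ^ 3 + m2 * w)
      (fun z => sin (sqrt r0 * z)) (fun z => cos (sqrt r0 * z)))
  /\
  (* case 4 *)
  invariant2
    (fun w => l1 ^ 2 * (m4 * w + m5))
    (fun _ => 0)
    (fun w => m2 * w + m3)
    (fun _ => 1) (fun z => (z - m1) ^ 2)
  /\
  (* case 5 *)
  (m1 <> 0 ->
    invariant2
      (fun w => l1 ^ 2 * (m1 ^ 2 * m3 / (4 * l1 ^ 2) * w + m6))
      (fun _ => 0)
      (fun w => 1 / 2 * m3 * w ^ 2 + m4 * w + m5)
      (fun _ => 1) (fun z => sin ((z + m2) / m1))).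
Proof.
  repeat split.
  - apply (invariant2_ext _ _ _ _ _ (invariant2_1_z (l1 ^ 2 * m5 / 2) (l1 ^ 2 * m6)
             (l1 ^ 2 * m7) (l1 * m3) (l1 * m4) m1 m2)); intro; field.
  - intros r1 Hr1.
    apply (invariant2_ext _ _ _ _ _ (invariant2_1_exp r1 (m1 / (12 * r1 ^ 2))
             (l1 * m5 / (2 * r1) - m2 / (4 * r1 ^ 2)) (l1 ^ 2 * m7) (l1 * m5) (l1 * m6) m3 m4));
      intro; field; tauto.
  - intros r0 Hr0.
    assert (Hsqrt : sqrt r0 ^ 2 = r0) by (apply pow2_sqrt; lra).
    apply (invariant2_ext _ _ _ _ _ (invariant2_sin_cos (sqrt r0) (m1 / (3 * r0))
             (l1 ^ 2 * m4) (l1 * m3) m2));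
      intro; rewrite ?Hsqrt; field; repeat split; (assumption || lra).
  - apply (invariant2_ext _ _ _ _ _ (invariant2_1_sqr m1 (l1 ^ 2 * m4) (l1 ^ 2 * m5) m2 m3));
      intro; ring.
  - intro Hm1.
    apply (invariant2_ext _ _ _ _ _ (invariant2_1_sin (/ m1) (m2 / m1) (m1 ^ 2 * m3 / 4)
             (l1 ^ 2 * m6) m4 m5)); intro; [field; tauto .. | f_equal; field; tauto].
Qed.
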